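(* For every integer $m\geq 5$ there exist a ranking profile $R$ over $m$ candidates and a ranking $\succ\in\mathcal{R}$ such that $R(\succ)=\frac{m}{5}\big/\binom{m}{2}$ and every ranking $\rhd$ chosen by the Squared Kemeny rule for $R$ (i.e., every minimizer of $\sum_{\succ'\in\mathcal{R}}R(\succ')\,\mathit{swap}(\succ',\rhd)^2$, under any tie-breaking) satisfies $u(\succ,\rhd)=0$.
   Context: Let $C=\{x_1,\dots,x_m\}$ be a set of $m$ candidates. A ranking is a strict linear order over $C$; $\mathcal{R}$ denotes the set of all rankings over $C$. A ranking profile is a function $R:\mathcal{R}\to[0,1]$ with $\sum_{\succ\in\mathcal{R}}R(\succ)=1$. For rankings $\succ,\rhd$, the utility is $u(\succ,\rhd)=|\{(x,y)\in C^2: x\succ y \text{ and } x\rhd y\}|$ and the swap distance is $\mathit{swap}(\succ,\rhd)=|\{(x,y)\in C^2: x\succ y\text{ and } y\rhd x\}|=\binom{m}{2}-u(\succ,\rhd)$. The Squared Kemeny rule chooses a ranking $\rhd\in\mathcal{R}$ minimizing $\sum_{\succ\in\mathcal{R}}R(\succ)\,\mathit{swap}(\succ,\rhd)^2$. *)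

From HB Require Import structures.
From mathcomp Require Import all_boot all_order all_algebra all_fingroup.
From mathcomp Require Import reals.
Set Implicit Arguments. Unset Strict Implicit. Unset Printing Implicit Defensive.
Import Order.TTheory GRing.Theory Num.Theory.
Local Open Scope ring_scope.

(* A ranking (strict linear order over 'I_m) is
   represented by the bijection r : {perm 'I_m} sending each candidate to its
   position (0 = top); x is preferred to y in r iff r x < r y.  This is a
   bijection between permutations and strict linear orders on 'I_m. *)
Definition ranking (m : nat) := {perm 'I_m}.

Definition prefers m (r : ranking m) (x y : 'I_m) : bool := (r x < r y)%N.

Definition utility m (s t : ranking m) : nat :=
  #|[set p : 'I_m * 'I_m | prefers s p.1 p.2 && prefers t p.1 p.2]|.

Definition swap_dist m (s t : ranking m) : nat :=
  #|[set p : 'I_m * 'I_m | prefers s p.1 p.2 && prefers t p.2 p.1]|.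

Definition is_profile (F : realType) m (P : {ffun ranking m -> F}) : Prop :=
  (forall r, 0 <= P r <= 1) /\ \sum_(r : ranking m) P r = 1.

Definition sqkemeny_cost (F : realType) m (P : {ffun ranking m -> F})
    (t : ranking m) : F :=
  \sum_(s : ranking m) P s * ((swap_dist s t) ^ 2)%N%:R.

(* t is chosen by Squared Kemeny (under some tie-breaking) iff it minimizes. *)
Definition sqkemeny_winner (F : realType) m (P : {ffun ranking m -> F})
    (t : ranking m) : Prop :=
  forall t' : ranking m, sqkemeny_cost P t <= sqkemeny_cost P t'.

From HB Require Import structures.
From mathcomp Require Import all_boot all_order all_algebra all_fingroup.
From mathcomp Require Import reals.
From mathcomp Require Import zify ring lra.
Set Implicit Arguments. Unset Strict Implicit. Unset Printing Implicit Defensive.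
Import Order.TTheory GRing.Theory Num.Theory.
Local Open Scope ring_scope.

(* The profile puts weight p on the reversal rho of the identity ranking and
   spreads the remaining mass over the rankings obtained from the identity by
   moving one candidate to the top or to the bottom.  For every ranking a,
   n |-> n^2 lies, at integer points, above its secant through swap(a, 1)
   and swap(a, 1) + 1, so
   swap(a, t)^2 - swap(a, 1)^2 >= (2 swap(a, 1) + 1) (swap(a, t) - swap(a, 1)),
   and the right-hand side splits into a sum over the pairs that t inverts
   with respect to the identity.  Each such pair contributes at least a margin Q,
   while the term of rho changes by exactly p (u^2 - 2 u C(m,2)) when t has u
   inversions.  Once 2 p C(m,2) < Q + p, the identity is strictly cheaper than
   every t with u > 0, so the identity is the only Squared Kemeny winner and it
   agrees with rho on no pair.  The weights are tuned so that this holds with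
   p = (m/5) / C(m,2): uniform for m >= 6, and inversely proportional to
   2 swap(a, 1) + 1 for m = 5. *)

Lemma sum_mul_eq_indicator (R : pzSemiRingType) (T : finType) (f : T -> R) k :
  \sum_i f i * (i == k)%:R = f k.
Proof.
rewrite (bigD1 k) //= eqxx mulr1 big1 ?addr0 // => i /negbTE ->.
by rewrite mulr0.
Qed.

Lemma sum_ord_rev (R : nmodType) n (f : nat -> R) :
  \sum_(j < n.+1) f (n - j)%N = \sum_(j < n.+1) f j.
Proof.
rewrite (reindex_inj rev_ord_inj); apply: eq_bigr => j _.
by rewrite /= subSS subKn // -ltnS.
Qed.

Lemma sum_bool_pair (R : nmodType) (T : finType) (f : bool * T -> R) :
  \sum_i f i = \sum_j f (true, j) + \sum_j f (false, j).
Proof.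
rewrite -(big_bool _ (fun b => \sum_j f (b, j))) (pair_bigA _ (fun b j => f (b, j))) /=.
by apply: eq_bigr => -[].
Qed.

Section OrderedPairs.
Variable m : nat.
Implicit Types (x y : 'I_m) (a b t : ranking m).

Lemma sum_ord_ltn k : (k <= m)%N -> (\sum_(x : 'I_m) (x < k) = k)%N.
Proof.
move=> le_km; rewrite -[RHS]card_ord -sum1_card (big_ord_widen _ (fun=> 1%N) le_km).
by rewrite [RHS]big_mkcond; apply: eq_bigr => x _; case: (x < k)%N.
Qed.

Lemma sum_ord_gtn k : (k < m)%N -> (\sum_(x : 'I_m) (k < x) = m - k.+1)%N.
Proof.
move=> lt_km; rewrite -(sum_ord_ltn (leq_subr k.+1 m)) (reindex_inj rev_ord_inj) /=.
by apply: eq_bigr => x _; congr nat_of_bool; have := ltn_ord x; lia.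
Qed.

Lemma sum_eq_indicator (P : pred 'I_m) j : (\sum_(y | P y) (y == j) = P j)%N.
Proof.
rewrite big_mkcond (bigD1 j) //= eqxx big1 => [|y /negbTE neq_yj].
  by case: (P j).
by rewrite neq_yj; case: (P y).
Qed.

Lemma sum_ltn_pairs (V : nmodType) (f : 'I_m -> 'I_m -> V) :
  (forall x, f x x = 0) ->
  \sum_(x : 'I_m) \sum_(y : 'I_m) f x y =
  \sum_(x : 'I_m) \sum_(y : 'I_m | (x < y)%N) (f x y + f y x).
Proof.
move=> f_diag; under [RHS]eq_bigr do rewrite big_split.
rewrite big_split /= [X in _ + X](exchange_big_dep predT) //= -big_split /=.
apply: eq_bigr => x _; rewrite (bigID (fun y : 'I_m => x < y)%N) /=; congr (_ + _).
rewrite (bigD1 x) ?ltnn //= f_diag add0r; apply: eq_bigl => y.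
by rewrite -leqNgt ltn_neqAle andbC val_eqE.
Qed.

Lemma sum_ltn_pairs1 : (\sum_(x : 'I_m) \sum_(y : 'I_m | x < y) 1 = 'C(m, 2))%N.
Proof.
rewrite (exchange_big_dep predT) //= -bin2_sum big_mkord; apply: eq_bigr => y _.
rewrite -[RHS](sum_ord_ltn (ltnW (ltn_ord y))) big_mkcond.
by apply: eq_bigr => x _; case: (x < y)%N.
Qed.

Lemma card_rel_pairs (f : rel 'I_m) : (forall x, f x x = false) ->
  #|[set p : 'I_m * 'I_m | f p.1 p.2]| =
  (\sum_(x : 'I_m) \sum_(y : 'I_m | x < y) (f x y + f y x))%N.
Proof.
move=> f_irr; rewrite -(sum_ltn_pairs (f := fun x y => f x y : nat)) => [|x].
  by rewrite -sum1_card big_mkcond pair_bigA; apply: eq_bigr => -[x y] _; rewrite inE.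
by rewrite f_irr.
Qed.

Lemma prefers_irr a x : prefers a x x = false.
Proof. by rewrite /prefers ltnn. Qed.

Lemma prefersN a x y : x != y -> prefers a x y = ~~ prefers a y x.
Proof.
move=> neq_xy; rewrite /prefers -leqNgt ltn_neqAle andbC.
by rewrite (inj_eq val_inj) (inj_eq perm_inj) neq_xy andbT.
Qed.

Definition inversions a : nat := \sum_(x : 'I_m) \sum_(y : 'I_m | (x < y)%N) prefers a y x.

Lemma swap_distE a b : swap_dist a b =
  (\sum_(x : 'I_m) \sum_(y : 'I_m | x < y) (prefers a y x != prefers b y x))%N.
Proof.
rewrite /swap_dist (card_rel_pairs (f := fun x y => prefers a x y && prefers b y x));
  last by move=> x; rewrite prefers_irr.
apply: eq_bigr => x _; apply: eq_bigr => y lt_xy.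
have neq_xy : x != y by rewrite -(inj_eq val_inj) neq_ltn lt_xy.
by rewrite !(prefersN _ neq_xy); case: (prefers a y x); case: (prefers b y x).
Qed.

Lemma utilityE a b : utility a b =
  (\sum_(x : 'I_m) \sum_(y : 'I_m | x < y) (prefers a y x == prefers b y x))%N.
Proof.
rewrite /utility (card_rel_pairs (f := fun x y => prefers a x y && prefers b x y));
  last by move=> x; rewrite prefers_irr.
apply: eq_bigr => x _; apply: eq_bigr => y lt_xy.
have neq_xy : x != y by rewrite -(inj_eq val_inj) neq_ltn lt_xy.
by rewrite !(prefersN _ neq_xy); case: (prefers a y x); case: (prefers b y x).
Qed.

Lemma prefers1 x y : prefers 1%g x y = (x < y)%N.
Proof. by rewrite /prefers !perm1. Qed.

Definition reversal : ranking m := perm (@rev_ord_inj m).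

Lemma prefers_reversal x y : prefers reversal x y = (y < x)%N.
Proof. by rewrite /prefers !permE /= ltn_sub2lE. Qed.

Lemma swap_dist1r a : swap_dist a 1%g = inversions a.
Proof.
rewrite swap_distE; apply: eq_bigr => x _; apply: eq_bigr => y lt_xy.
by rewrite prefers1 (leq_gtF (ltnW lt_xy)); case: (prefers a y x).
Qed.

Lemma inversions1 : inversions 1%g = 0%N.
Proof.
rewrite /inversions big1 // => x _; rewrite big1 // => y lt_xy.
by rewrite prefers1 (leq_gtF (ltnW lt_xy)).
Qed.

Lemma swap_dist_reversal t : (swap_dist reversal t + inversions t)%N = 'C(m, 2).
Proof.
rewrite swap_distE -big_split -sum_ltn_pairs1; apply: eq_bigr => x _.
rewrite -big_split; apply: eq_bigr => y lt_xy.
by rewrite prefers_reversal lt_xy; case: (prefers t y x).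
Qed.

Lemma inversions_reversal : inversions reversal = 'C(m, 2).
Proof. by rewrite -(swap_dist_reversal 1%g) inversions1 addn0 swap_dist1r. Qed.

Lemma utility_reversal t : utility reversal t = inversions t.
Proof.
rewrite utilityE; apply: eq_bigr => x _; apply: eq_bigr => y lt_xy.
by rewrite prefers_reversal lt_xy.
Qed.

End OrderedPairs.

Section SquaredDistanceGain.
Variables (R : realDomainType) (m : nat).
Implicit Types (a t : ranking m).

Lemma swap_dist_gain a t :
  (swap_dist a t)%:R - (swap_dist a 1%g)%:R =
  \sum_(x : 'I_m) \sum_(y : 'I_m | (x < y)%N)
     (prefers t y x)%:R * (1 - 2 * (prefers a y x)%:R) :> R.
Proof.
rewrite !swap_distE !natr_sum -sumrB; apply: eq_bigr => x _.
rewrite !natr_sum -sumrB; apply: eq_bigr => y lt_xy.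
rewrite prefers1 (leq_gtF (ltnW lt_xy)).
by case: (prefers a y x); case: (prefers t y x); rewrite /=; ring.
Qed.

Lemma natr_secant_le_sqrB (k l : nat) :
  (2 * l%:R + 1) * (k%:R - l%:R) <= k%:R ^+ 2 - l%:R ^+ 2 :> R.
Proof.
(* the gap is (k - l) (k - l - 1), a product of two integers of the same sign *)
have [le_kl | lt_lk] := leqP k l.
  have : k%:R <= l%:R :> R by rewrite ler_nat.
  nra.
have : k%:R >= l%:R + 1 :> R by rewrite natr1 ler_nat.
nra.
Qed.

Variables (I : finType) (v : I -> ranking m) (w : I -> R).
Hypothesis w_ge0 : forall i, 0 <= w i.

(* First-order change of \sum_i w i * swap_dist (v i) t ^ 2 at t = 1 when t
   inverts the pair x < y. *)
Definition margin (x y : 'I_m) : R :=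
  \sum_i w i * (2 * (inversions (v i))%:R + 1) * (1 - 2 * (prefers (v i) y x)%:R).

Lemma sum_sqr_swap_dist_ge t Q :
  (forall x y : 'I_m, (x < y)%N -> Q <= margin x y) ->
  \sum_i w i * (inversions (v i))%:R ^+ 2 + (inversions t)%:R * Q <=
  \sum_i w i * (swap_dist (v i) t)%:R ^+ 2.
Proof.
move=> Q_le; rewrite -lerBrDl -sumrB.
have gainE : \sum_i w i * (2 * (inversions (v i))%:R + 1) *
      ((swap_dist (v i) t)%:R - (inversions (v i))%:R) =
    \sum_(x : 'I_m) \sum_(y : 'I_m | (x < y)%N) (prefers t y x)%:R * margin x y.
  under eq_bigr do rewrite -swap_dist1r swap_dist_gain !mulr_sumr.
  rewrite exchange_big /=; apply: eq_bigr => x _.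
  under eq_bigr do rewrite mulr_sumr.
  rewrite exchange_big /=; apply: eq_bigr => y _.
  by rewrite /margin mulr_sumr; apply: eq_bigr => i _; rewrite swap_dist1r; ring.
apply: (le_trans (y := \sum_i w i * (2 * (inversions (v i))%:R + 1) *
      ((swap_dist (v i) t)%:R - (inversions (v i))%:R))).
  rewrite gainE /inversions natr_sum mulr_suml ler_sum // => x _.
  rewrite natr_sum mulr_suml ler_sum // => y lt_xy.
  by rewrite ler_wpM2l ?ler0n ?Q_le.
apply: ler_sum => i _; rewrite -mulrBr -mulrA ler_wpM2l //.
exact: natr_secant_le_sqrB.
Qed.

End SquaredDistanceGain.

Section ReversalMixture.
Variables (F : realType) (m : nat) (I : finType) (v : I -> ranking m) (w : I -> F) (p : F).
Hypotheses (w_ge0 : forall i, 0 <= w i) (p_gt0 : 0 < p).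

Definition mixture : {ffun ranking m -> F} :=
  [ffun r => p * (r == reversal m)%:R + \sum_i w i * (r == v i)%:R].

Lemma sum_mixture (f : ranking m -> F) :
  \sum_r mixture r * f r = p * f (reversal m) + \sum_i w i * f (v i).
Proof.
have sum_delta c s : \sum_r c * (r == s)%:R * f r = c * f s.
  by under eq_bigr do rewrite mulrAC; rewrite sum_mul_eq_indicator.
under eq_bigr do rewrite ffunE mulrDl mulr_suml.
by rewrite big_split /= exchange_big /= sum_delta; under eq_bigr do rewrite sum_delta.
Qed.

Lemma mixture_ge0 r : 0 <= mixture r.
Proof.
rewrite ffunE addr_ge0 ?mulr_ge0 ?ler0n ?(ltW p_gt0) //.
by rewrite sumr_ge0 // => i _; rewrite mulr_ge0 ?ler0n.
Qed.

Lemma mixture_profile : p + \sum_i w i = 1 -> is_profile mixture.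
Proof.
move=> mass1; have sum1 : \sum_r mixture r = 1.
  have := sum_mixture (fun=> 1).
  under eq_bigr do rewrite mulr1.
  under [X in _ = _ + X]eq_bigr do rewrite mulr1.
  by rewrite mulr1 mass1.
split=> // r; rewrite mixture_ge0 -sum1 (bigD1 r) //= lerDl.
by rewrite sumr_ge0 // => r' _; apply: mixture_ge0.
Qed.

Lemma mixture_reversal : (forall i, v i != reversal m) -> mixture (reversal m) = p.
Proof.
move=> v_neq; rewrite ffunE eqxx mulr1 big1 ?addr0 // => i _.
by rewrite eq_sym (negbTE (v_neq i)) mulr0.
Qed.

Lemma sqkemeny_cost_mixture t : sqkemeny_cost mixture t =
  p * (swap_dist (reversal m) t)%:R ^+ 2 + \sum_i w i * (swap_dist (v i) t)%:R ^+ 2.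
Proof.
rewrite /sqkemeny_cost (sum_mixture (fun r => (swap_dist r t ^ 2)%:R)) natrX.
by under eq_bigr do rewrite natrX.
Qed.

Variable Q : F.
Hypotheses (Q_le_margin : forall x y : 'I_m, (x < y)%N -> Q <= margin v w x y)
           (Q_large : 2 * p * ('C(m, 2))%:R < Q + p).

Lemma sqkemeny_cost_mixture_lt t :
  (0 < inversions t)%N -> sqkemeny_cost mixture 1%g < sqkemeny_cost mixture t.
Proof.
move=> inv_gt0; rewrite !sqkemeny_cost_mixture.
under eq_bigr do rewrite swap_dist1r.
have revE s : (swap_dist (reversal m) s)%:R = ('C(m, 2))%:R - (inversions s)%:R :> F.
  by rewrite -(swap_dist_reversal s) natrD addrK.
rewrite !revE inversions1 subr0.
have key := sum_sqr_swap_dist_ge w_ge0 t Q_le_margin.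
have u_ge1 : 1 <= (inversions t)%:R :> F by rewrite ler1n.
move: key u_ge1 Q_large; move: ('C(m, 2))%:R (inversions t)%:R => C u key u_ge1 C_lt.
have gap : 0 < u * (p * u - 2 * p * C + Q).
  have pu : p <= p * u by rewrite ler_peMr // ltW.
  by rewrite mulr_gt0 //; [exact: lt_le_trans ltr01 u_ge1 | lra].
nra.
Qed.

Lemma mixture_winner_reversal t :
  sqkemeny_winner mixture t -> utility (reversal m) t = 0%N.
Proof.
move=> t_win; rewrite utility_reversal; apply/eqP; rewrite -leqn0 leqNgt.
by apply/negP => /sqkemeny_cost_mixture_lt; rewrite ltNge t_win.
Qed.

End ReversalMixture.

Section MoveToEnd.
Variable n : nat.
Implicit Types j x y : 'I_n.+1.

Lemma prefers_lift_perm1 j k x y :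
  x != j -> y != j -> prefers (lift_perm j k 1) x y = (x < y)%N.
Proof.
case: (unliftP j x) => [x' ->|->]; last by rewrite eqxx.
case: (unliftP j y) => [y' ->|->]; last by rewrite eqxx.
by rewrite /prefers !lift_perm_lift !perm1 /= !ltnNge !leq_bump2.
Qed.

Lemma lift_perm1_neq j k x : x != j -> lift_perm j k 1 x != k.
Proof. by rewrite -{2}(lift_perm_id j k 1) (inj_eq perm_inj). Qed.

Definition to_top j : ranking n.+1 := lift_perm j ord0 1.
Definition to_bottom j : ranking n.+1 := lift_perm j ord_max 1.

Lemma prefers_to_top j x y : (x < y)%N -> prefers (to_top j) y x = (y == j).
Proof.
have [->|neq_yj] := eqVneq y j => lt_xy.
  rewrite /prefers lift_perm_id /= lt0n; apply: lift_perm1_neq.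
  by rewrite -(inj_eq val_inj) neq_ltn lt_xy.
have [->|neq_xj] := eqVneq x j; first by rewrite /prefers lift_perm_id ltn0.
by rewrite prefers_lift_perm1 // (leq_gtF (ltnW lt_xy)).
Qed.

Lemma prefers_to_bottom j x y : (x < y)%N -> prefers (to_bottom j) y x = (x == j).
Proof.
have [->|neq_xj] := eqVneq x j => lt_xy.
  rewrite /prefers lift_perm_id /= ltn_neqAle -ltnS ltn_ord andbT.
  apply: lift_perm1_neq; by rewrite -(inj_eq val_inj) neq_ltn lt_xy orbT.
have [->|neq_yj] := eqVneq y j.
  by rewrite /prefers lift_perm_id /= ltnNge -ltnS ltn_ord.
by rewrite prefers_lift_perm1 // (leq_gtF (ltnW lt_xy)).
Qed.

Lemma inversions_to_top j : inversions (to_top j) = j.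
Proof.
rewrite /inversions -[RHS](sum_ord_ltn (ltnW (ltn_ord j))); apply: eq_bigr => x _.
by under eq_bigr => y lt_xy do rewrite prefers_to_top //; rewrite sum_eq_indicator.
Qed.

Lemma inversions_to_bottom j : inversions (to_bottom j) = (n - j)%N.
Proof.
rewrite /inversions (exchange_big_dep predT) //= -subSS -(sum_ord_gtn (ltn_ord j)).
apply: eq_bigr => y _.
by under eq_bigr => x lt_xy do rewrite prefers_to_bottom //; rewrite sum_eq_indicator.
Qed.

End MoveToEnd.

Definition sqkemeny_reversal (F : realType) m (p : F) : Prop :=
  exists (P : {ffun ranking m -> F}) (s : ranking m),
    [/\ is_profile P, P s = p & forall t, sqkemeny_winner P t -> utility s t = 0%N].

Section TopBottomProfile.
Variables (F : realType) (n : nat) (g : nat -> F).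
Local Notation G k := (g k * (2 * k%:R + 1)).
Local Notation S := (\sum_(j < n.+1) G j).

Definition top_bottom (i : bool * 'I_n.+1) : ranking n.+1 :=
  if i.1 then to_top i.2 else to_bottom i.2.

Definition top_bottom_weight i : F := g (inversions (top_bottom i)).

Lemma inversions_top_bottom i :
  inversions (top_bottom i) = if i.1 then i.2 : nat else (n - i.2)%N.
Proof. by case: i => -[] j; rewrite /top_bottom ?inversions_to_top ?inversions_to_bottom. Qed.

Lemma top_bottom_neq_reversal i : (1 < n)%N -> top_bottom i != reversal n.+1.
Proof.
move=> n_gt1; have inv_le : (inversions (top_bottom i) <= n)%N.
  by rewrite inversions_top_bottom; case: ifP => _; rewrite ?leq_ord ?leq_subr.
have n_lt : (n < 'C(n.+1, 2))%N.
  by rewrite binS bin1 -[X in (X < _)%N]add0n ltn_add2r bin_gt0.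
by apply/eqP => tb_rev; move: inv_le; rewrite tb_rev inversions_reversal leqNgt n_lt.
Qed.

Lemma sum_top_bottom_weight : \sum_i top_bottom_weight i = 2 * \sum_(j < n.+1) g j.
Proof.
rewrite sum_bool_pair /top_bottom_weight.
under eq_bigr do rewrite inversions_top_bottom.
under [X in _ + X]eq_bigr do rewrite inversions_top_bottom.
by rewrite /= (sum_ord_rev n g) mulr_natl mulr2n.
Qed.

Lemma margin_top_bottom (x y : 'I_n.+1) : (x < y)%N ->
  margin top_bottom top_bottom_weight x y = (S - 2 * G y) + (S - 2 * G (n - x)%N).
Proof.
move=> lt_xy; rewrite /margin sum_bool_pair /top_bottom_weight; congr (_ + _).
  under eq_bigr => j _ do rewrite inversions_top_bottom /= prefers_to_top // eq_sym.
  rewrite -(sum_mul_eq_indicator (fun j : 'I_n.+1 => G j) y) mulr_sumr -sumrB.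
  by apply: eq_bigr => j _; ring.
under eq_bigr => j _ do rewrite inversions_top_bottom /= prefers_to_bottom // eq_sym.
rewrite -(sum_ord_rev n (fun k => G k)).
rewrite -(sum_mul_eq_indicator (fun j : 'I_n.+1 => G (n - j)%N) x) mulr_sumr -sumrB.
by apply: eq_bigr => j _; ring.
Qed.

Lemma top_bottom_sqkemeny_reversal M p :
  (1 < n)%N -> 0 < p -> (forall k, 0 <= g k) -> p + 2 * \sum_(j < n.+1) g j = 1 ->
  (forall k, (k <= n)%N -> G k <= M) ->
  2 * p * ('C(n.+1, 2))%:R < 2 * S - 4 * M + p ->
  sqkemeny_reversal n.+1 p.
Proof.
move=> n_gt1 p_gt0 g_ge0 mass1 G_le bound.
have w_ge0 i : 0 <= top_bottom_weight i by apply: g_ge0.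
exists (mixture top_bottom top_bottom_weight p), (reversal n.+1); split.
- by apply: (mixture_profile _ w_ge0 p_gt0); rewrite sum_top_bottom_weight.
- by apply: mixture_reversal => i; apply: top_bottom_neq_reversal.
apply: (mixture_winner_reversal w_ge0 p_gt0 (Q := 2 * S - 4 * M)) => // x y lt_xy.
rewrite margin_top_bottom //.
have := G_le y (leq_ord y); have := G_le (n - x)%N (leq_subr _ _).
lra.
Qed.

End TopBottomProfile.

Lemma natr_bin2 (R : numFieldType) n : ('C(n.+1, 2))%:R = n.+1%:R * n%:R / 2 :> R.
Proof.
rewrite -natrM.
have -> : (n.+1 * n = 2 * 'C(n.+1, 2))%N by rewrite -(mul_bin_diag n.+1 1) bin1.
by rewrite natrM; field.
Qed.

Lemma sum_odd_succ (R : comNzRingType) n :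
  \sum_(j < n) (2 * (j.+1)%:R + 1) = (n * n + 2 * n)%:R :> R.
Proof.
elim: n => [|n IH]; first by rewrite big_ord0.
by rewrite big_ord_recr /= IH !natrD !natrM -!natr1; ring.
Qed.

Lemma sqkemeny_reversal_ge6 (F : realType) n : (5 <= n)%N ->
  sqkemeny_reversal n.+1 (n.+1%:R / 5 / ('C(n.+1, 2))%:R : F).
Proof.
move=> n_ge5; set p := _ / _ / _.
have N_ge5 : (5 : F) <= n%:R by rewrite ler_nat.
have pE : p = 2 / (5 * n%:R).
  rewrite /p natr_bin2; field.
  by apply/andP; split; apply/eqP => ?; lra.
have p_gt0 : 0 < p by rewrite pE divr_gt0 //; nra.
have p_lt1 : p < 1 by rewrite pE ltr_pdivrMr; nra.
(* to_top 0 and to_bottom n are the identity; they get weight 0 *)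
set c := (1 - p) / (2 * n%:R).
have c_ge0 : 0 <= c by rewrite /c divr_ge0 //; [lra | nra].
apply: (top_bottom_sqkemeny_reversal (g := fun k => if k == 0%N then 0 else c)
          (M := c * (2 * n%:R + 1))).
- lia.
- exact: p_gt0.
- by move=> k; case: ifP.
- rewrite big_ord_recl /= sumr_const card_ord -mulr_natr /c add0r; field.
  by rewrite pnatr_eq0; lia.
- move=> k le_kn; case: ifP => _; first by rewrite mul0r mulr_ge0 // ler_wpDl // mulr_ge0.
  by rewrite ler_wpM2l // lerD2r ler_wpM2l // ler_nat.
rewrite big_ord_recl /= mul0r add0r -mulr_sumr sum_odd_succ natr_bin2 /c pE.
rewrite -[n.+1%:R]natr1 natrD !natrM -subr_gt0.
set N := n%:R.
rewrite [X in 0 < X](_ : _ = (3 * N ^+ 3 - 14 * N ^+ 2 - 4 * N + 4) / (5 * N ^+ 2)).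
  by apply: divr_gt0; nra.
by field; rewrite /N pnatr_eq0; lia.
Qed.

Lemma sqkemeny_reversal_5 (F : realType) :
  sqkemeny_reversal 5 (5%:R / 5 / ('C(5, 2))%:R : F).
Proof.
have pE : 5%:R / 5 / ('C(5, 2))%:R = 1 / 10 :> F.
  by rewrite (_ : 'C(5, 2) = 10)%N //; field.
(* g k * (2 k + 1) = c for k > 0, and c solves 1/10 + 2 c (1/3 + 1/5 + 1/7 + 1/9) = 1 *)
rewrite pE; set c : F := 567 / 992.
apply: (top_bottom_sqkemeny_reversal
          (g := fun k => if k == 0%N then 0 else c / (2 * k%:R + 1)) (M := c)).
- by [].
- lra.
- move=> k; case: ifP => // _; rewrite divr_ge0 // ?addr_ge0 ?mulr_ge0 ?ler0n //.
  by rewrite /c; lra.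
- by rewrite !big_ord_recr big_ord0 /= /c; field.
- move=> k _; case: ifP => _; first by rewrite mul0r /c; lra.
  by rewrite mulfVK // gt_eqF // ltr_wpDl // mulr_ge0 ?ler0n.
rewrite !big_ord_recr big_ord0 /= /c (_ : 'C(5, 2) = 10)%N //.
by rewrite -subr_gt0 [X in 0 < X](_ : _ = 479 / 1240); [lra | field].
Qed.

Theorem mainTheorem1 (F : realType) (m : nat) (hm : (5 <= m)%N) :
  exists (P : {ffun ranking m -> F}) (s : ranking m),
    [/\ is_profile P,
        P s = (m%:R / 5) / ('C(m, 2))%:R
      & forall t : ranking m, sqkemeny_winner P t -> utility s t = 0%N].
Proof.
case: m hm => [//|n]; rewrite ltnS leq_eqVlt => /orP[/eqP <-|n_ge5].
  exact: sqkemeny_reversal_5.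
exact: sqkemeny_reversal_ge6.
Qed.
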